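(* Let $B$ be an associative ring with unit, let $n\geq 3$, and let $\phi$ be a homogeneous quasi-homomorphism on $\Gamma=EL_n(B)$. Then: (1) $\phi(s)=0$ for every elementary matrix $s\in\Gamma$; (2) $\phi(h)=0$ for every $h\in U_nB\cup L_nB$.
   Context: An elementary matrix in $M_n(B)$ is a matrix whose diagonal entries are $1$ and all of whose off-diagonal entries except at most one are $0$; $EL_n(B)$ is the group generated by all elementary matrices. $U_nB$ (resp. $L_nB$) denotes the group of unit upper (resp. lower) triangular matrices in $EL_n(B)$, i.e. those with all diagonal entries $1$ and all entries below (resp. above) the diagonal equal to $0$. A quasi-homomorphism on a group $\Gamma$ is a function $\phi\colon\Gamma\to\mathbb{R}$ with $\sup_{g,h\in\Gamma}|\phi(gh)-\phi(g)-\phi(h)|<\infty$; it is homogeneous if $\phi(g^m)=m\,\phi(g)$ for all $g\in\Gamma$ and $m\in\mathbb{Z}$. *)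

From HB Require Import structures.
From mathcomp Require Import all_boot all_order all_algebra.
From mathcomp Require Import reals.
Set Implicit Arguments. Unset Strict Implicit. Unset Printing Implicit Defensive.
Import Order.TTheory GRing.Theory Num.Theory.
Local Open Scope ring_scope.

Definition elementary (B : pzRingType) (n : nat) (s : 'M[B]_n) : Prop :=
  (forall i, s i i = 1) /\
  exists i j : 'I_n, forall k l : 'I_n, k != l -> (k, l) != (i, j) -> s k l = 0.

(* Since the inverse of
   an elementary matrix (1 + a e_ij, i <> j) is the elementary matrix
   1 - a e_ij, this is the set of finite products of elementary matrices. *)
Inductive EL (B : pzRingType) (n : nat) : 'M[B]_n -> Prop :=
| EL_one : EL (1%:M)
| EL_mul s g : elementary s -> EL g -> EL (s *m g).

Fixpoint mxpow (B : pzRingType) (n : nat) (g : 'M[B]_n) (k : nat) : 'M[B]_n :=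
  match k with 0 => 1%:M | k'.+1 => g *m mxpow g k' end.

Definition mxzpow (B : pzRingType) (n : nat) (g ginv : 'M[B]_n) (m : int)
  : 'M[B]_n :=
  match m with Posz k => mxpow g k | Negz k => mxpow ginv k.+1 end.

Definition quasi_hom (R : realType) (B : pzRingType) (n : nat)
  (phi : 'M[B]_n -> R) : Prop :=
  exists C : R, forall g h, EL g -> EL h ->
    `|phi (g *m h) - phi g - phi h| <= C.

Definition homogeneous (R : realType) (B : pzRingType) (n : nat)
  (phi : 'M[B]_n -> R) : Prop :=
  forall g ginv, EL g -> EL ginv -> g *m ginv = 1%:M -> ginv *m g = 1%:M ->
    forall m : int, phi (mxzpow g ginv m) = m%:~R * phi g.

Definition unit_upper (B : pzRingType) (n : nat) (h : 'M[B]_n) : Prop :=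
  EL h /\ (forall i, h i i = 1) /\ (forall i j : 'I_n, (j < i)%N -> h i j = 0).

Definition unit_lower (B : pzRingType) (n : nat) (h : 'M[B]_n) : Prop :=
  EL h /\ (forall i, h i i = 1) /\ (forall i j : 'I_n, (i < j)%N -> h i j = 0).

From HB Require Import structures.
From mathcomp Require Import all_boot all_order all_algebra.
From mathcomp Require Import reals.
From mathcomp Require Import zify lra.
Import Order.TTheory GRing.Theory Num.Theory.
Local Open Scope ring_scope.
Set Implicit Arguments. Unset Strict Implicit.

(* For n >= 3 every transvection e_ij(a) is the commutator [e_ik(a), e_kj(1)]
   with k distinct from i and j.  A homogeneous quasi-homomorphism phi is odd,
   so it is bounded by three times its defect on commutators; as
   e_ij(a)^m = e_ij(m a) is again a commutator, m |phi (e_ij(a))| is bounded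
   uniformly in m, forcing phi (e_ij(a)) = 0.  A unitriangular matrix is a
   product of n^2 elementary matrices (taken column by column), so
   phi is bounded by n^2 times the defect on all of them; powers of a
   unitriangular matrix are unitriangular, hence phi vanishes there too. *)

Section Transvections.
Variables (B : pzRingType) (n : nat).
Local Notation M := 'M[B]_n.

Lemma mul_scale_delta_mx (i j k l : 'I_n) (a b : B) :
  (a *: delta_mx i j) *m (b *: delta_mx k l) =
  (if j == k then a * b else 0) *: (delta_mx i l : M).
Proof.
apply/matrixP => x y; rewrite !mxE (bigD1 j) //= big1; last first.
  by move=> z /negPf hz; rewrite !mxE hz andbF mulr0 mul0r.
rewrite !mxE eqxx andbT addr0.
by case: (x == i); case: (y == l); case: (j == k);
  rewrite /= ?mulr0 ?mul0r ?mulr1 ?mul1r.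
Qed.

Definition transvection (i j : 'I_n) (c : B) : M := 1%:M + c *: delta_mx i j.

Lemma transvection0 i j : transvection i j 0 = 1%:M.
Proof. by rewrite /transvection scale0r addr0. Qed.

Lemma transvectionD i j a b : i != j ->
  transvection i j a *m transvection i j b = transvection i j (a + b).
Proof.
move=> hij; rewrite /transvection mulmxDl !mulmxDr !mul1mx mulmx1.
rewrite mul_scale_delta_mx eq_sym (negPf hij) scale0r addr0 scalerDl.
by rewrite -addrA (addrC (b *: _)).
Qed.

Lemma mxpow_transvection i j a m : i != j ->
  mxpow (transvection i j a) m = transvection i j (a *+ m).
Proof.
move=> hij; elim: m => [|m IH]; first by rewrite mulr0n transvection0.
by rewrite /= IH transvectionD // mulrS.
Qed.

Lemma transvection_commutator i j k b : i != j -> i != k -> k != j ->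
  transvection i j b = transvection i k b *m (transvection k j 1 *m
    (transvection i k (- b) *m transvection k j (-1))).
Proof.
move=> hij hik hkj.
have swap : transvection i k b *m transvection k j 1 =
    transvection i j b *m (transvection k j 1 *m transvection i k b).
  rewrite /transvection !(mulmxDl, mulmxDr, mul1mx, mulmx1) !mul_scale_delta_mx.
  rewrite !eqxx (eq_sym j i) (negPf hij) (eq_sym j k) (negPf hkj).
  by rewrite !scale0r !addr0 !mulr1 addrA -(addrA 1%:M) (addrC (1 *: _)) !addrA.
rewrite !mulmxA swap -!mulmxA (mulmxA (transvection i k b)) transvectionD //.
by rewrite subrr transvection0 mul1mx transvectionD // subrr transvection0 mulmx1.
Qed.

Lemma elementary_transvection i j c : i != j \/ c = 0 ->
  elementary (transvection i j c).
Proof.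
move=> hc; split.
  move=> x; rewrite !mxE eqxx /=; case: hc => [hij | ->]; last first.
    by rewrite mul0r addr0.
  suff -> : (x == i) && (x == j) = false by rewrite mulr0 addr0.
  by apply/negP => /andP[/eqP xi /eqP xj]; rewrite -xi -xj eqxx in hij.
exists i, j => k l /negPf hkl hp; rewrite !mxE hkl add0r.
suff -> : (k == i) && (l == j) = false by rewrite mulr0.
by apply/negP => /andP[/eqP hk /eqP hl]; rewrite hk hl eqxx in hp.
Qed.

Lemma elementary_cases (s : M) : elementary s ->
  s = 1%:M \/ exists i j c, i != j /\ s = transvection i j c.
Proof.
move=> [hd [i [j hij]]].
have off_ij k l : k != l -> (k, l) != (i, j) -> s k l = 0 by exact: hij.
case: (eqVneq i j) => [eij|nij]; [left | right].
  apply/matrixP => k l; rewrite !mxE; case: (eqVneq k l) => [->|kl].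
    by rewrite hd.
  rewrite off_ij //; apply/negP => /eqP[hk hl].
  by rewrite hk hl eij eqxx in kl.
exists i, j, (s i j); split=> //; apply/matrixP => k l; rewrite !mxE.
case: (eqVneq k l) => [<-|kl].
  have -> : (k == i) && (k == j) = false.
    by apply/negP => /andP[/eqP xi /eqP xj]; rewrite -xi -xj eqxx in nij.
  by rewrite hd mulr0 addr0.
rewrite add0r; case: (eqVneq (k, l) (i, j)) => [[-> ->]|p].
  by rewrite !eqxx mulr1.
rewrite off_ij //.
suff -> : (k == i) && (l == j) = false by rewrite mulr0.
by apply/negP => /andP[/eqP hk /eqP hl]; rewrite hk hl eqxx in p.
Qed.

Lemma EL_elementary (s : M) : elementary s -> EL s.
Proof. by move=> hs; rewrite -[s]mulmx1; exact: EL_mul hs (EL_one _ _). Qed.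

Lemma EL_transvection i j c : i != j -> EL (transvection i j c).
Proof. by move=> hij; apply/EL_elementary/elementary_transvection; left. Qed.

Lemma EL_mulmx (g h : M) : EL g -> EL h -> EL (g *m h).
Proof.
elim=> [|s g' hs _ IH] hh; first by rewrite mul1mx.
by rewrite -mulmxA; apply: EL_mul (IH hh).
Qed.

Lemma EL_invertible (g : M) : EL g ->
  exists ginv, [/\ EL ginv, g *m ginv = 1%:M & ginv *m g = 1%:M].
Proof.
elim=> [|s g' hs _ [gi [hgi h1 h2]]].
  by exists 1%:M; rewrite mul1mx; split=> //; exact: EL_one.
have [->|[i [j [c [hij ->]]]]] := elementary_cases hs.
  by exists gi; rewrite mul1mx.
exists (gi *m transvection i j (- c)); split.
- exact/EL_mulmx/EL_transvection.
- by rewrite -mulmxA (mulmxA g') h1 mul1mx transvectionD // subrr transvection0.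
- by rewrite -mulmxA (mulmxA (transvection _ _ _)) transvectionD // addNr
    transvection0 mul1mx.
Qed.

Definition mxprod (l : seq M) : M := foldr mulmx 1%:M l.

Lemma EL_mxprod (l : seq M) : (forall s, s \in l -> elementary s) ->
  EL (mxprod l).
Proof.
elim: l => [|s l IH] hl /=; first exact: EL_one.
by apply: EL_mul; [apply: hl; rewrite inE eqxx | apply: IH => t ht;
  apply: hl; rewrite inE ht orbT].
Qed.

Lemma mxprod_1D (l : seq M) : pairwise (fun N N' => N *m N' == 0) l ->
  mxprod [seq 1%:M + N | N <- l] = 1%:M + \sum_(N <- l) N.
Proof.
elim: l => [|N l IH]; first by rewrite big_nil addr0.
rewrite pairwise_cons => /andP[/allP hN hl].
rewrite /= IH // big_cons mulmxDl !mulmxDr !mul1mx mulmx1 mulmx_sumr.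
have -> : \sum_(N' <- l) N *m N' = 0.
  by apply: big1_seq => N' /andP[_ /hN /eqP].
by rewrite addr0 -addrA (addrC N).
Qed.

Lemma exists_ord_neq2 : (3 <= n)%N -> forall i j : 'I_n,
  exists k : 'I_n, i != k /\ k != j.
Proof.
move=> hn i j.
have : (0 < #|~: [set i; j]|)%N.
  by have := cardsC [set i; j]; rewrite cards2 card_ord; case: (i != j); lia.
move=> /card_gt0P[k]; rewrite !inE negb_or => /andP[ki kj].
by exists k; rewrite eq_sym.
Qed.

End Transvections.

Section Unitriangular.
Variables (B : pzRingType) (n : nat) (rk : 'I_n -> nat).
Hypothesis rk_inj : injective rk.
Local Notation M := 'M[B]_n.

(* Unitriangular with respect to the order of the indices given by rk:
   rk = val gives the upper, rk i = n - i the lower unitriangular matrices. *)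
Definition unitriangular (h : M) :=
  (forall i, h i i = 1) /\ (forall i j, (rk j < rk i)%N -> h i j = 0).

Lemma unitriangular1 : unitriangular 1%:M.
Proof.
split=> [i|i j hji]; rewrite !mxE ?eqxx //.
by case: eqP hji => // ->; rewrite ltnn.
Qed.

Lemma unitriangular_mul (g h : M) :
  unitriangular g -> unitriangular h -> unitriangular (g *m h).
Proof.
move=> [gd gz] [hd hz]; split=> [i|i j hji]; rewrite !mxE.
  rewrite (bigD1 i) //= gd hd mul1r big1 ?addr0 // => k hk.
  case: (ltngtP (rk k) (rk i)) => hki; first by rewrite gz ?mul0r.
    by rewrite hz ?mulr0.
  by rewrite (rk_inj hki) eqxx in hk.
rewrite big1 // => k _; case: (ltnP (rk k) (rk i)) => hki.
  by rewrite gz ?mul0r.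
by rewrite hz ?mulr0 //; apply: leq_trans hki.
Qed.

Lemma unitriangular_mxpow (h : M) m :
  unitriangular h -> unitriangular (mxpow h m).
Proof.
move=> hh; elim: m => [|m IH]; [exact: unitriangular1 | exact: unitriangular_mul].
Qed.

(* Write h = 1 + sum_p N_p with N_p the p-th entry of h - 1, and multiply the
   factors 1 + N_p with the column ranks rk p.2 decreasing: a product
   N_p N_q is then nonzero only if p.2 = q.1, which forces q to lie on or
   below the diagonal, where h - 1 vanishes. *)
Lemma unitriangular_factor (h : M) : unitriangular h ->
  exists l, [/\ size l = (n * n)%N, forall s, s \in l -> elementary s
            & h = mxprod l].
Proof.
move=> [hd hz].
pose N (p : 'I_n * 'I_n) : M := (h - 1%:M) p.1 p.2 *: delta_mx p.1 p.2.
pose r : rel ('I_n * 'I_n) := fun p q => (rk q.2 <= rk p.2)%N.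
have N_diag p : p.1 = p.2 -> (h - 1%:M) p.1 p.2 = 0.
  by move=> e; rewrite !mxE e hd eqxx subrr.
have chain_free p q : r p q -> p.2 = q.1 -> (h - 1%:M) q.1 q.2 = 0.
  rewrite /r => hpq e; rewrite e in hpq.
  case: (ltngtP (rk q.2) (rk q.1)) hpq => // [hq _ | /rk_inj/esym/N_diag //].
  have /negPf q12 : q.1 != q.2 by apply: contraTneq hq => ->; rewrite ltnn.
  by rewrite !mxE hz // q12 subr0.
set s := sort r (enum {: 'I_n * 'I_n}).
exists [seq 1%:M + X | X <- map N s]; split.
- by rewrite !size_map size_sort -cardE card_prod card_ord.
- move=> t /mapP[_ /mapP[p _ ->] ->].
  apply: (@elementary_transvection _ _ p.1 p.2).
  by case: (eqVneq p.1 p.2) => [/N_diag|]; [right | left].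
- rewrite mxprod_1D; last first.
    rewrite pairwise_map; apply: (@sub_pairwise _ r).
      move=> p q hpq /=; rewrite /N mul_scale_delta_mx; apply/eqP.
      case: eqP => [e|_]; last by rewrite scale0r.
      by rewrite (chain_free p q) // mulr0 scale0r.
    rewrite -sorted_pairwise ?sort_sorted //.
      by move=> a b; rewrite /r leq_total.
    by move=> a b c; rewrite /r => h1 h2; apply: leq_trans h2 h1.
  rewrite big_map (perm_big (enum {: 'I_n * 'I_n})) ?perm_sort //.
  rewrite big_enum /= -(pair_big xpredT xpredT (fun i j => N (i, j))) /=.
  by rewrite -matrix_sum_delta addrC subrK.
Qed.

End Unitriangular.

Lemma eq0_of_linearly_bounded (R : realType) (x K : R) :
  (forall m : nat, m%:R * `|x| <= K) -> x = 0.
Proof.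
move=> hb; apply/eqP; apply: contraT => hx.
have ax : 0 < `|x| by rewrite normr_gt0.
have hK : 0 <= K by have := hb 0%N; rewrite mul0r.
have := archi_boundP (divr_ge0 hK (ltW ax)).
by rewrite ltr_pdivrMr // ltNge hb.
Qed.

Section QuasiHomomorphism.
Variables (R : realType) (B : pzRingType) (n : nat) (phi : 'M[B]_n -> R).
Hypothesis phi_homogeneous : homogeneous phi.
Variable C : R.
Hypothesis phi_defect : forall g h, EL g -> EL h ->
  `|phi (g *m h) - phi g - phi h| <= C.
Hypothesis n_ge3 : (3 <= n)%N.
Local Notation M := 'M[B]_n.

Lemma phi_one : phi 1%:M = 0.
Proof.
have EL1 := EL_one B n.
by have := phi_homogeneous EL1 EL1 (mulmx1 _) (mulmx1 _) 0; rewrite mul0r.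
Qed.

Lemma phi_inverse (g gi : M) : EL g -> EL gi ->
  g *m gi = 1%:M -> gi *m g = 1%:M -> phi gi = - phi g.
Proof.
move=> hg hgi h1 h2; have := phi_homogeneous hg hgi h1 h2 (Negz 0).
by rewrite /= mulmx1 => ->; rewrite NegzE mulrNz mulN1r.
Qed.

Lemma phi_mxpow (g : M) m : EL g -> phi (mxpow g m) = m%:R * phi g.
Proof.
move=> hg; have [gi [hgi h1 h2]] := EL_invertible hg.
exact: (phi_homogeneous hg hgi h1 h2 m).
Qed.

Lemma phi_eq0_of_bounded_powers (g : M) (K : R) : EL g ->
  (forall m, `|phi (mxpow g m)| <= K) -> phi g = 0.
Proof.
move=> hg hb; apply: (@eq0_of_linearly_bounded _ _ K) => m.
by rewrite -[m%:R]normr_nat -normrM -phi_mxpow.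
Qed.

Lemma phi_commutator_le (g h gi hi : M) : EL g -> EL h -> EL gi -> EL hi ->
  phi gi = - phi g -> phi hi = - phi h ->
  `|phi (g *m (h *m (gi *m hi)))| <= C *+ 3.
Proof.
move=> hg hh hgi hhi egi ehi.
have := phi_defect hg (EL_mulmx hh (EL_mulmx hgi hhi)).
have := phi_defect hh (EL_mulmx hgi hhi).
have := phi_defect hgi hhi.
rewrite egi ehi !ler_norml => /andP[? ?] /andP[? ?] /andP[? ?].
by apply/andP; split; lra.
Qed.

Lemma phi_transvection (i j : 'I_n) a : i != j -> phi (transvection i j a) = 0.
Proof.
move=> hij; have [k [hik hkj]] := exists_ord_neq2 n_ge3 i j.
apply: (@phi_eq0_of_bounded_powers _ (C *+ 3)); first exact: EL_transvection.
move=> m; rewrite mxpow_transvection // (transvection_commutator _ hij hik hkj).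
have phi_opp p q c : p != q ->
    phi (transvection p q (- c)) = - phi (transvection p q c).
  move=> hpq; apply: phi_inverse; try exact: EL_transvection.
    by rewrite transvectionD // addrN transvection0.
  by rewrite transvectionD // addNr transvection0.
by apply: phi_commutator_le; (exact: EL_transvection) || exact: phi_opp.
Qed.

Lemma phi_elementary (s : M) : elementary s -> phi s = 0.
Proof.
move=> /elementary_cases[->|[i [j [c [hij ->]]]]]; first exact: phi_one.
exact: phi_transvection.
Qed.

Lemma phi_mxprod_le (l : seq M) : (forall s, s \in l -> elementary s) ->
  `|phi (mxprod l)| <= (size l)%:R * C.
Proof.
elim: l => [|s l IH] hl.
  by rewrite /= phi_one normr0 mul0r.
have hs : elementary s by apply: hl; rewrite inE eqxx.
have hl' t : t \in l -> elementary t by move=> ht; apply: hl; rewrite inE ht orbT.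
have := phi_defect (EL_elementary hs) (EL_mxprod hl').
rewrite /= (phi_elementary hs) -natr1 mulrDl mul1r.
have := IH hl'; rewrite !ler_norml => /andP[? ?] /andP[? ?].
by apply/andP; split; lra.
Qed.

Lemma phi_unitriangular (rk : 'I_n -> nat) (h : M) :
  injective rk -> EL h -> unitriangular rk h -> phi h = 0.
Proof.
move=> rk_inj hE hu.
apply: (@phi_eq0_of_bounded_powers _ ((n * n)%:R * C)) => // m.
have := unitriangular_factor rk_inj (unitriangular_mxpow rk_inj m hu).
move=> [l [<- hl ->]].
exact: phi_mxprod_le.
Qed.

End QuasiHomomorphism.

Theorem lemma2p5 (R : realType) (B : pzRingType) (n : nat) (hn : (3 <= n)%N)
  (phi : 'M[B]_n -> R) (hq : quasi_hom phi) (hh : homogeneous phi) :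
  (forall s : 'M[B]_n, elementary s -> phi s = 0) /\
  (forall h : 'M[B]_n, unit_upper h \/ unit_lower h -> phi h = 0).
Proof.
have [C hC] := hq.
split=> [s|h [[hE hu] | [hE [hd hz]]]]; first exact: (phi_elementary hh hC hn).
  exact: (phi_unitriangular hh hC hn (@ord_inj n) hE hu).
pose rk (i : 'I_n) := (n - i)%N.
have rk_inj : injective rk.
  move=> i j; rewrite /rk => e; apply: ord_inj.
  by rewrite -(subKn (ltnW (ltn_ord i))) e subKn // ltnW.
apply: (phi_unitriangular hh hC hn rk_inj hE); split=> // i j hji.
by apply: hz; rewrite -(ltn_sub2lE _ (ltnW (ltn_ord j))).
Qed.
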